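(* Let $X,Y$ be Tychonoff spaces and $f:X\to Y$ a meshing map, and let $f_\beta:\beta X\to\beta Y$ be the continuous extension of $f$. Then for any two distinct points $x_1,x_2\in N(X)$ with $f(x_1)=f(x_2)$ there exist neighbourhoods $U_1$ of $x_1$ and $U_2$ of $x_2$ in $\beta X$ such that $f_\beta(U_1)\cap f_\beta(U_2)$ is a compact subset of $Y$.
   Context: $\beta X$ denotes the Stone–Čech compactification. A space $X$ is Menger if for each sequence $(\mathcal{U}_n)$ of open covers of $X$ there is a sequence $(\mathcal{V}_n)$ with each $\mathcal{V}_n$ a finite subset of $\mathcal{U}_n$ and $\bigcup_{n}\bigcup\mathcal{V}_n=X$. $X$ is locally Menger at $x$ if there are an open set $U$ and a Menger subspace $M$ of $X$ with $x\in U\subseteq M$; $N(X)$ denotes the set of points of $X$ at which $X$ is not locally Menger. A continuous surjection $f:X\to Y$ is a meshing map if there are compactifications $bX$ of $X$ and $cY$ of $Y$ and a continuous extension $\tilde f:bX\to cY$ of $f$ onto $cY$ such that $\tilde f|_{bX\setminus X}$ is a homeomorphism onto $cY\setminus Y$. *)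

From HB Require Import structures.
From mathcomp Require Import all_boot all_order all_algebra.
From mathcomp Require Import all_classical all_reals all_analysis.
From mathcomp Require Import Rstruct Rstruct_topology.
From Stdlib Require Reals.

Set Implicit Arguments.
Unset Strict Implicit.
Unset Printing Implicit Defensive.

Import Order.TTheory GRing.Theory Num.Theory.
Local Open Scope classical_set_scope.

Definition completely_regular (T : topologicalType) : Prop :=
  forall (A : set T) (x : T), closed A -> ~ A x ->
    exists g : T -> Rdefinitions.R,
      continuous g /\ g x = 0%R /\ (forall y, A y -> g y = 1%R).

Definition tychonoff_space (T : topologicalType) : Prop :=
  accessible_space T /\ completely_regular T.

Definition embedding (X K : topologicalType) (e : X -> K) : Prop :=
  continuous e /\ injective e /\
  (forall U : set X, open U ->
     exists V : set K, open V /\ e @` U = V `&` range e).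

Definition compactification (X K : topologicalType) (e : X -> K) : Prop :=
  compact [set: K] /\ hausdorff_space K /\ embedding e /\ dense (range e).

Definition stone_cech (X K : topologicalType) (e : X -> K) : Prop :=
  compactification e /\
  forall (Z : topologicalType) (g : X -> Z),
    compact [set: Z] -> hausdorff_space Z -> continuous g ->
    exists G : K -> Z, continuous G /\ G \o e = g.

Definition meshing (X Y : topologicalType) (f : X -> Y) : Prop :=
  continuous f /\ f @` setT = setT /\
  exists (bX cY : topologicalType) (eX : X -> bX) (eY : Y -> cY) (F : bX -> cY),
    compactification eX /\ compactification eY /\
    continuous F /\ F @` setT = setT /\ F \o eX = eY \o f /\
    (* F restricted to bX \ X is a homeomorphism onto cY \ Y *)
    let remX := ~` range eX in let remY := ~` range eY in
    F @` remX = remY /\ {in remX &, injective F} /\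
    (forall U : set bX, open U ->
       exists V : set cY, open V /\ F @` (U `&` remX) = V `&` remY).

(* Menger property for a subspace A of X (open covers of the subspace are
   described by families of open sets of X covering A). *)
Definition menger_subspace (X : topologicalType) (A : set X) : Prop :=
  forall U : nat -> set (set X),
    (forall n, U n `<=` open) ->
    (forall n, A `<=` \bigcup_(W in U n) W) ->
    exists V : nat -> set (set X),
      (forall n, finite_set (V n) /\ V n `<=` U n) /\
      A `<=` \bigcup_n \bigcup_(W in V n) W.

Definition locally_menger_at (X : topologicalType) (x : X) : Prop :=
  exists (U M : set X), open U /\ menger_subspace M /\ U x /\ U `<=` M.

Definition not_locally_menger (X : topologicalType) : set X :=
  [set x | ~ locally_menger_at x].
Arguments not_locally_menger : clear implicits.

From HB Require Import structures.
From mathcomp Require Import all_boot all_order all_algebra.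
From mathcomp Require Import all_classical all_reals all_analysis.

Local Open Scope classical_set_scope.

(* Let F : bX' -> cY witness that f is meshing, and let p : βX -> bX' and
   q : βY -> cY extend the embeddings of X and Y, so that F ∘ p = q ∘ f_β.
   Choose closed neighbourhoods U1, U2 of x1, x2 with disjoint p-images.  If
   f_β u1 = f_β u2 with u_i ∈ U_i, then p u1 ≠ p u2 have the same F-image; F is
   injective on the remainder and maps X into Y, so this image lies in Y, and
   since q⁻¹(Y) = Y the point f_β u1 lies in Y.  Thus f_β(U1) ∩ f_β(U2) is a
   compact subset of βY contained in Y. *)

Lemma hausdorff_open_sep {T : topologicalType} {x y : T} :
  hausdorff_space T -> x <> y ->
  exists A B : set T, [/\ open A, open B, A x, B y & A `&` B = set0].
Proof.
rewrite open_hausdorff => hT /eqP /hT [[A B] /=].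
rewrite !inE => -[Ax By] [oA oB AB].
by exists A, B; split => //; apply/eqP.
Qed.

Lemma compact_hausdorff_closed_nbhs (T : topologicalType) (x : T) (N : set T) :
  hausdorff_space T -> compact [set: T] -> nbhs x N ->
  exists C : set T, [/\ nbhs x C, closed C & C `<=` N].
Proof.
move=> hT cT Nx.
have [M Mx clMN] := compact_regular hT cT (@filterT _ (nbhs x) _) Nx.
exists (closure M); split => //; last exact: closed_closure.
exact: filterS (@subset_closure _ M) Mx.
Qed.

Lemma dense_continuous_eq {S T Z : topologicalType} {e : S -> T} {g h : T -> Z} :
  hausdorff_space Z -> dense (range e) -> continuous g -> continuous h ->
  g \o e = h \o e -> g = h.
Proof.
move=> hZ de cg ch ghe; apply/funext => t; apply: contrapT => /(hausdorff_open_sep hZ).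
move=> [A [B [oA oB At Bt AB]]].
have oAB : open (g @^-1` A `&` h @^-1` B).
  by apply: openI; apply: (proj1 (continuousP _)).
have [z [[Ag Bh] [s _ esz]]] := de _ (ex_intro _ t (conj At Bt)) oAB; subst z.
have ghs : g (e s) = h (e s) := congr1 (@^~ s) ghe.
have : (A `&` B) (h (e s)) by split; rewrite // -ghs.
by rewrite AB.
Qed.

Lemma embedding_preimage_compact (S K : topologicalType) (e : S -> K) (C : set K) :
  embedding e -> compact C -> C `<=` range e -> compact (e @^-1` C).
Proof.
move=> [_ [einj eopen]] cC Ce F PF FC.
have [k [Ck clk]] := cC _ (fmap_proper_filter e PF) FC.
have [s _ esk] := Ce _ Ck; subst k.
exists s; split => // A N FA; rewrite nbhsE => -[U [oU Us] UN].
have [V [oV eUV]] := eopen U oU.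
have Ves : V (e s) by have [] : (V `&` range e) (e s) by rewrite -eUV; exists s.
have FeA : (e @ F) (e @` A) by exact: filterS (@preimage_image _ _ e A) FA.
have [_ [[a Aa <-] Vea]] := clk _ _ FeA (open_nbhs_nbhs (conj oV Ves)).
have [u Uu /einj eua] : (e @` U) (e a) by rewrite eUV; split => //; exists a.
by exists a; split => //; apply: UN; rewrite -eua.
Qed.

Lemma image_preimage_sub_range (S T : Type) (f : S -> T) (A : set T) :
  A `<=` range f -> f @` (f @^-1` A) = A.
Proof.
move=> Af; rewrite eqEsubset; split; first exact: image_preimage_subset.
by move=> t /[dup] /Af [s _ <-] At; exists s.
Qed.

Lemma embedding_extension_fiber {S T K : topologicalType} {e : S -> T}
    {e' : S -> K} {q : T -> K} {z : T} {y : S} :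
  hausdorff_space T -> continuous e -> dense (range e) -> embedding e' ->
  continuous q -> q \o e = e' -> q z = e' y -> z = e y.
Proof.
move=> hT ce de [_ [e'inj e'open]] cq qe qzy.
apply: contrapT => /nesym eyz.
have [Ay [Az [oAy oAz Ayey Azz AyAz]]] := hausdorff_open_sep hT eyz.
have [V [oV e'OV]] := e'open _ (proj1 (continuousP e) ce _ oAy).
have oAzV : open (Az `&` q @^-1` V) by apply: openI => //; exact: (proj1 (continuousP q)).
have AzVz : (Az `&` q @^-1` V) z.
  have [Vqz _] : (V `&` range e') (q z) by rewrite -e'OV qzy; exists y.
  by split.
have [w [[Azw Vw] [s _ esw]]] := de _ (ex_intro _ z AzVz) oAzV; subst w.
have qes : q (e s) = e' s := congr1 (@^~ s) qe.
have [s' Ayes' /e'inj ss'] : (e' @` (e @^-1` Ay)) (e' s).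
  by rewrite e'OV -qes; split => //; exists s.
have : (Ay `&` Az) (e s) by split; rewrite // -ss'.
by rewrite AyAz.
Qed.

Lemma remainder_collision_in_range {S T A B : Type} {eS : S -> A} {eT : T -> B}
    {f : S -> T} {F : A -> B} {a1 a2 : A} :
  F \o eS = eT \o f -> {in ~` range eS &, injective F} ->
  a1 <> a2 -> F a1 = F a2 -> range eT (F a1).
Proof.
move=> FeS Finj a12 Fa12; apply: contrapT => FaT.
have remainder a : ~ range eT (F a) -> (~` range eS) a.
  move=> FaT' [s _ esa]; apply: FaT'; exists (f s) => //.
  by rewrite -esa -[RHS]/((F \o eS) s) FeS.
have [a1_rem a2_rem] : (~` range eS) a1 /\ (~` range eS) a2.
  by split; apply: remainder; rewrite // -Fa12.
by apply: a12; apply: Finj; rewrite ?inE.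
Qed.

Lemma closed_image_compact {S T : topologicalType} {g : S -> T} {U : set S} :
  compact [set: S] -> continuous g -> closed U -> compact (g @` U).
Proof.
move=> cS cg clU; apply: continuous_compact; first exact: continuous_subspaceT.
exact: subclosed_compact clU cS (subsetT _).
Qed.

Lemma stone_cech_ext_square {X Y bX bY cX cY : topologicalType}
    {f : X -> Y} {eX : X -> bX} {eY : Y -> bY} {eX' : X -> cX} {eY' : Y -> cY}
    {fb : bX -> bY} {F : cX -> cY} :
  stone_cech eX -> stone_cech eY -> compactification eX' -> compactification eY' ->
  continuous fb -> continuous F -> fb \o eX = eY \o f -> F \o eX' = eY' \o f ->
  exists p : bX -> cX, exists q : bY -> cY,
    [/\ continuous p, continuous q, p \o eX = eX', q \o eY = eY' & F \o p = q \o fb].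
Proof.
move=> [[_ [_ [_ dX]]] extX] [_ extY] [cptX' [hX' [[ceX' _] _]]] [cptY' [hY' [[ceY' _] _]]].
move=> fbc Fc fbe FeX.
have [p [pc peX]] := extX _ _ cptX' hX' ceX'.
have [q [qc qeY]] := extY _ _ cptY' hY' ceY'.
exists p, q; split => //; apply: (dense_continuous_eq hY' dX).
- by move=> b; apply: continuous_comp; [exact: pc | exact: Fc].
- by move=> b; apply: continuous_comp; [exact: fbc | exact: qc].
by rewrite -compA peX FeX -qeY -compA -fbe.
Qed.

Lemma meshing_image_meet_sub_range {X Y bX bY cX cY : topologicalType}
    {f : X -> Y} {eX' : X -> cX} {eY : Y -> bY} {eY' : Y -> cY}
    {fb : bX -> bY} {F : cX -> cY} {p : bX -> cX} {q : bY -> cY} {U1 U2 : set bX} :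
  hausdorff_space bY -> continuous eY -> dense (range eY) -> embedding eY' ->
  continuous q -> q \o eY = eY' -> F \o eX' = eY' \o f ->
  {in ~` range eX' &, injective F} -> F \o p = q \o fb ->
  p @` U1 `&` p @` U2 = set0 -> fb @` U1 `&` fb @` U2 `<=` range eY.
Proof.
move=> hY ceY dY embY' qc qeY FeX Finj Fpq U12 _ [[u1 U1u1 <-] [u2 U2u2 fbu12]].
have pu12 : p u1 <> p u2.
  move=> pu; have : (p @` U1 `&` p @` U2) (p u1) by split; [exists u1 | rewrite pu; exists u2].
  by rewrite U12.
have Fpu a : F (p a) = q (fb a) by rewrite -[LHS]/((F \o p) a) Fpq.
have Fpu12 : F (p u1) = F (p u2) by rewrite !Fpu fbu12.
have [y _ eY'y] := remainder_collision_in_range FeX Finj pu12 Fpu12.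
exists y => //; apply/esym/(embedding_extension_fiber hY ceY dY embY' qc qeY).
by rewrite -Fpu.
Qed.

Theorem theorem5p22 (X Y : topologicalType) (f : X -> Y)
  (bX bY : topologicalType) (eX : X -> bX) (eY : Y -> bY) (fb : bX -> bY) :
  tychonoff_space X -> tychonoff_space Y ->
  meshing f ->
  stone_cech eX -> stone_cech eY ->
  continuous fb -> fb \o eX = eY \o f ->
  forall x1 x2 : X, x1 <> x2 ->
    not_locally_menger X x1 -> not_locally_menger X x2 -> f x1 = f x2 ->
    exists U1 U2 : set bX,
      nbhs (eX x1) U1 /\ nbhs (eX x2) U2 /\
      exists C : set Y, compact C /\ fb @` U1 `&` fb @` U2 = eY @` C.
Proof.
move=> _ _ [_ [_ [bX' [cY [eX' [eY' [F [cmpX [cmpY [Fc [_ [FeX /= [_ [Finj _]]]]]]]]]]]]]].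
move=> scX scY fbc fbe x1 x2 x12 _ _ _.
have [[cptX [hX _]] _] := scX; have [[_ [hY [embY dY]]] _] := scY.
have [_ [hX' [[_ [eX'inj _]] _]]] := cmpX; have [_ [_ [embY' _]]] := cmpY.
have [p [q [pc qc peX qeY Fpq]]] := stone_cech_ext_square scX scY cmpX cmpY fbc Fc fbe FeX.
have closed_nbhs_in x W : open W -> W (eX' x) ->
    exists U, [/\ nbhs (eX x) U, closed U & U `<=` p @^-1` W].
  move=> oW Wx; apply: compact_hausdorff_closed_nbhs => //; apply: pc.
  by rewrite -[p _]/((p \o eX) x) peX; exact: open_nbhs_nbhs.
have /(hausdorff_open_sep hX') [W1 [W2 [oW1 oW2 W1x W2x W12]]] : eX' x1 <> eX' x2.
  by move/eX'inj.
have [U1 [U1x clU1 U1W]] := closed_nbhs_in x1 W1 oW1 W1x.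
have [U2 [U2x clU2 U2W]] := closed_nbhs_in x2 W2 oW2 W2x.
exists U1, U2; split => //; split => //.
have pU12 : p @` U1 `&` p @` U2 = set0.
  by rewrite -subset0 -W12; apply: setISS; rewrite image_sub.
have K_in_Y := meshing_image_meet_sub_range hY embY.1 dY embY' qc qeY FeX Finj Fpq pU12.
exists (eY @^-1` (fb @` U1 `&` fb @` U2)); rewrite image_preimage_sub_range //.
split => //; apply: embedding_preimage_compact => //; apply: compact_closedI.
  exact: closed_image_compact.
exact/(compact_closed hY)/closed_image_compact.
Qed.
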